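(* Let $p$ be a prime, $\mathbb{K}$ a finite extension of $\mathbb{Q}_p$ of degree $n$ (with the unique extension of the $p$-adic norm), and $G$ a topological group. Then $EH^2_{cb}(G, \mathbb{K}) \cong EH^2_{cb}(G, \mathbb{Q}_p)^n$ (as $\mathbb{Q}_p$-vector spaces). In particular, $EH^2_{cb}(G, \mathbb{K}) = 0$ if and only if $EH^2_{cb}(G, \mathbb{Q}_p) = 0$.
   Context: For a valued field $\mathbb{L}$, a quasimorphism $G\to\mathbb{L}$ is a continuous map $f$ with $\sup_{g,h}|f(gh)-f(g)-f(h)|<\infty$. The exact second continuous bounded cohomology is $EH^2_{cb}(G,\mathbb{L})=Q(G,\mathbb{L})/(\mathrm{Hom}_c(G,\mathbb{L})+C_b(G,\mathbb{L}))$, where $Q$ is the space of quasimorphisms, $\mathrm{Hom}_c$ continuous homomorphisms and $C_b$ continuous bounded functions; equivalently, the kernel of the comparison map $H^2_{cb}(G,\mathbb{L})\to H^2_c(G,\mathbb{L})$ with trivial coefficients. *)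

From HB Require Import structures.
From mathcomp Require Import all_boot all_order all_algebra all_field.
From mathcomp Require Import all_classical all_reals all_analysis.
Set Implicit Arguments. Unset Strict Implicit. Unset Printing Implicit Defensive.
Import Order.TTheory GRing.Theory Num.Theory.
Local Open Scope ring_scope.

Definition is_absval (R : realType) (L : nzRingType) (a : L -> R) : Prop :=
  [/\ forall x, 0 <= a x,
      forall x, a x = 0 <-> x = 0,
      forall x y, a (x * y) = a x * a y &
      forall x y, a (x + y) <= a x + a y].

Definition padic_abs (R : realType) (p : nat) (q : rat) : R :=
  if q == 0 then 0
  else ((p%:R : R) ^+ (logn p (absz (denq q)))) / ((p%:R : R) ^+ (logn p (absz (numq q)))).

(* This characterizes Q_p up to
   isometric isomorphism. *)
Definition cauchy_seq (R : realType) (L : zmodType) (a : L -> R) (u : nat -> L) :=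
  forall eps : R, 0 < eps ->
    exists N, forall m k, (N <= m)%N -> (N <= k)%N -> a (u m - u k) < eps.

Definition converges_to (R : realType) (L : zmodType) (a : L -> R) (u : nat -> L) (l : L) :=
  forall eps : R, 0 < eps -> exists N, forall m, (N <= m)%N -> a (u m - l) < eps.

Definition is_Qp (R : realType) (p : nat) (F : fieldType) (absF : F -> R) : Prop :=
  [/\ is_absval absF,
      [pchar F] =i pred0,
      forall q : rat, absF (ratr q) = padic_abs R p q,
      (forall x : F, forall eps : R, 0 < eps -> exists q : rat, absF (x - ratr q) < eps) &
      (forall u : nat -> F, cauchy_seq absF u -> exists l, converges_to absF u l)].

Record topGroup := TopGroup {
  tg_car : topologicalType;
  tg_mul : tg_car -> tg_car -> tg_car;
  tg_inv : tg_car -> tg_car;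
  tg_one : tg_car;
  tg_mulA : associative tg_mul;
  tg_mul1 : left_id tg_one tg_mul;
  tg_mulV : left_inverse tg_one tg_inv tg_mul;
  tg_mul_cont : continuous (fun xy : tg_car * tg_car => tg_mul xy.1 xy.2);
  tg_inv_cont : continuous tg_inv }.

Section QM.
Variables (R : realType) (L : nzRingType) (a : L -> R) (G : topGroup).
Local Notation gmul := (@tg_mul G).

Definition cont_into (f : tg_car G -> L) : Prop :=
  forall x (eps : R), 0 < eps -> \forall y \near x, a (f y - f x) < eps.

Definition quasimorphism (f : tg_car G -> L) : Prop :=
  cont_into f /\
  exists C : R, forall g h, a (f (gmul g h) - f g - f h) <= C.

Definition cont_hom (f : tg_car G -> L) : Prop :=
  cont_into f /\ forall g h, f (gmul g h) = f g + f h.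

Definition cont_bounded (f : tg_car G -> L) : Prop :=
  cont_into f /\ exists C : R, forall g, a (f g) <= C.

(* f lies in Hom_c(G,L) + C_b(G,L), i.e. its class in EH^2_cb(G,L) is zero *)
Definition trivial_class (f : tg_car G -> L) : Prop :=
  exists phi psi, cont_hom phi /\ cont_bounded psi /\ forall g, f g = phi g + psi g.

Definition EH2cb_zero : Prop :=
  forall f, quasimorphism f -> trivial_class f.
End QM.

(* EH^2_cb(G,K) ~= EH^2_cb(G,Q_p)^n as Q_p-vector spaces, where
   EH^2_cb(G,L) = Q(G,L) / (Hom_c(G,L) + C_b(G,L)).  A map between the
   quotients is given on representatives (quasimorphisms); we require it to
   be well defined, Q_p-linear, injective and surjective on the quotients. *)
Definition EH2cb_iso_pow (R : realType) (F : fieldType) (absF : F -> R)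
    (K : fieldExtType F) (absK : K -> R) (G : topGroup) (n : nat) : Prop :=
  exists Phi : (tg_car G -> K) -> 'I_n -> tg_car G -> F,
  [/\
      forall f, quasimorphism absK f -> forall i, quasimorphism absF (Phi f i),
      forall f g, quasimorphism absK f -> quasimorphism absK g ->
        trivial_class absK (fun x => f x - g x) ->
        forall i, trivial_class absF (fun x => Phi f i x - Phi g i x),
      forall (c : F) f g, quasimorphism absK f -> quasimorphism absK g ->
        forall i, trivial_class absF
          (fun x => Phi (fun y => c *: f y + g y) i x - (c * Phi f i x + Phi g i x)),
      forall f, quasimorphism absK f ->
        (forall i, trivial_class absF (Phi f i)) -> trivial_class absK f &
      forall u : 'I_n -> tg_car G -> F, (forall i, quasimorphism absF (u i)) ->
        exists2 f, quasimorphism absK f &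
          forall i, trivial_class absF (fun x => Phi f i x - u i x)].

From HB Require Import structures.
From mathcomp Require Import all_boot all_order all_algebra all_field.
From mathcomp Require Import all_classical all_reals all_analysis.
Import Order.TTheory GRing.Theory Num.Theory.
Local Open Scope ring_scope.

(* The absolute value of K is a norm on the finite-dimensional Q_p-vector
   space K.  Over a complete field every norm on a finite-dimensional space
   dominates the coordinate functions of a basis b (the span of finitely many
   vectors is closed, so b_i stays at positive distance from the span of the
   others), hence the coordinates x |-> coord_i x are bounded additive maps
   K -> Q_p, and so are the maps c |-> c b_i.  Bounded additive maps preserve
   continuity, quasimorphisms and Hom_c + C_b, so f |-> (coord_i o f)_i and
   u |-> sum_i u_i b_i are mutually inverse already on quasimorphisms. *)

Section AbsoluteValue.
Context {R : realType} {L : nzRingType} {a : L -> R}.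
Hypothesis ha : is_absval a.

Lemma absv_ge0 x : 0 <= a x. Proof. by case: ha. Qed.

Lemma absv_eq0 x : a x = 0 -> x = 0. Proof. by case: ha => _ h _ _; apply h. Qed.

Lemma absv0 : a 0 = 0. Proof. by case: ha => _ h _ _; apply h. Qed.

Lemma absvM x y : a (x * y) = a x * a y. Proof. by case: ha. Qed.

Lemma absvD x y : a (x + y) <= a x + a y. Proof. by case: ha. Qed.

Lemma absv1 : a 1 = 1.
Proof.
have a1_neq0 : a 1 != 0 by apply/eqP => /absv_eq0/eqP; rewrite oner_eq0.
by apply: (mulfI a1_neq0); rewrite -absvM !mulr1.
Qed.

Lemma absvN x : a (- x) = a x.
Proof.
have aN1 : a (-1) = 1.
  by apply/eqP; rewrite -sqrp_eq1 ?absv_ge0 // expr2 -absvM mulrNN mulr1 absv1.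
by rewrite -mulN1r absvM aN1 mul1r.
Qed.

End AbsoluteValue.

Lemma inv_succ_lt {R : realType} {e : R} : 0 < e ->
  exists M, forall k, (M <= k)%N -> k.+1%:R^-1 < e.
Proof.
move=> e_gt0; exists (Num.truncn e^-1) => k hk.
rewrite -(invrK e) ltf_pV2 ?posrE ?invr_gt0 //.
by apply: lt_le_trans (truncnS_gt _) _; rewrite ler_nat.
Qed.

Lemma big_fun_ind (T I : Type) (V : zmodType) (P : (T -> V) -> Prop) :
  P (fun=> 0) -> (forall f g, P f -> P g -> P (f \+ g)) ->
  forall (r : seq I) (f : I -> T -> V), (forall i, P (f i)) ->
  P (fun x => \sum_(i <- r) f i x).
Proof.
move=> P0 PD r f Pf; elim: r => [|i r IH].
  by under eq_fun do rewrite big_nil.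
by under eq_fun do rewrite big_cons; apply: PD.
Qed.

Section ValuedFunctions.
Context {R : realType} {L : nzRingType} {a : L -> R} {G : topGroup}.
Hypothesis ha : is_absval a.
Implicit Types f g : tg_car G -> L.

Lemma cont_into_cst (c : L) : cont_into a (fun _ : tg_car G => c).
Proof. by move=> x e e0; apply: nearW => y; rewrite subrr absv0. Qed.

Lemma cont_intoD f g : cont_into a f -> cont_into a g -> cont_into a (f \+ g).
Proof.
move=> hf hg x e e0; have e2_gt0 : 0 < e / 2 by rewrite divr_gt0.
apply: filterS2 (hf x _ e2_gt0) (hg x _ e2_gt0) => y hfy hgy /=.
rewrite opprD addrACA (splitr e); exact: le_lt_trans (absvD ha _ _) (ltrD hfy hgy).
Qed.

Lemma quasimorphism0 : quasimorphism a (fun _ : tg_car G => 0).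
Proof. by split; [exact: cont_into_cst | exists 0 => g h; rewrite !subr0 absv0]. Qed.

Lemma quasimorphismD f g :
  quasimorphism a f -> quasimorphism a g -> quasimorphism a (f \+ g).
Proof.
move=> [f_cont [Cf hCf]] [g_cont [Cg hCg]]; split; first exact: cont_intoD.
exists (Cf + Cg) => x y /=; rewrite !opprD (addrACA (f _)) (addrACA (_ - f x)).
exact: le_trans (absvD ha _ _) (lerD (hCf x y) (hCg x y)).
Qed.

Lemma trivial_class0 : trivial_class a (fun _ : tg_car G => 0).
Proof.
exists (fun=> 0), (fun=> 0); split; last split; last by move=> x; rewrite addr0.
- by split; [exact: cont_into_cst | move=> *; rewrite addr0].
- by split; [exact: cont_into_cst | exists 0 => x; rewrite absv0].
Qed.

Lemma trivial_classD f g :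
  trivial_class a f -> trivial_class a g -> trivial_class a (f \+ g).
Proof.
move=> [phi [psi [[phi_cont phiM] [[psi_cont [C hC]] fE]]]].
move=> [phi' [psi' [[phi'_cont phi'M] [[psi'_cont [C' hC']] gE]]]].
exists (phi \+ phi'), (psi \+ psi'); split; last split.
- split; first exact: cont_intoD.
  by move=> x y /=; rewrite phiM phi'M addrACA.
- split; first exact: cont_intoD.
  by exists (C + C') => x; apply: le_trans (absvD ha _ _) (lerD (hC x) (hC' x)).
- by move=> x /=; rewrite fE gE addrACA.
Qed.

End ValuedFunctions.

Section BoundedAdditive.
Context {R : realType} {L1 L2 : nzRingType} {a1 : L1 -> R} {a2 : L2 -> R}.
Context {G : topGroup}.
Context {T : {additive L1 -> L2}} {C : R}.
Hypotheses (C_gt0 : 0 < C) (T_bounded : forall x, a2 (T x) <= C * a1 x).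
Implicit Types f : tg_car G -> L1.

Lemma cont_into_comp f : cont_into a1 f -> cont_into a2 (T \o f).
Proof.
move=> f_cont x e e0; apply: filterS (f_cont x _ (divr_gt0 e0 C_gt0)) => y hy /=.
by rewrite -raddfB; apply: le_lt_trans (T_bounded _) _; rewrite mulrC -ltr_pdivlMr.
Qed.

Lemma quasimorphism_comp f : quasimorphism a1 f -> quasimorphism a2 (T \o f).
Proof.
move=> [f_cont [Cf hCf]]; split; first exact: cont_into_comp.
exists (C * Cf) => x y /=; rewrite -!raddfB.
by apply: le_trans (T_bounded _) (ler_wpM2l (ltW C_gt0) (hCf x y)).
Qed.

Lemma trivial_class_comp f : trivial_class a1 f -> trivial_class a2 (T \o f).
Proof.
move=> [phi [psi [[phi_cont phiM] [[psi_cont [Cp hCp]] fE]]]].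
exists (T \o phi), (T \o psi); split; last split.
- by split; [exact: cont_into_comp | move=> x y /=; rewrite phiM raddfD].
- split; first exact: cont_into_comp.
  exists (C * Cp) => x.
  exact: le_trans (T_bounded _) (ler_wpM2l (ltW C_gt0) (hCp _)).
- by move=> x /=; rewrite fE raddfD.
Qed.

End BoundedAdditive.

Section FreeFamilyCoefficients.
Context {R : realType} {F : fieldType} {aF : F -> R}.
Hypotheses (haF : is_absval aF)
  (F_complete : forall u, cauchy_seq aF u -> exists l, converges_to aF u l).
Context {V : lmodType F} {N : V -> R}.
Hypotheses (N_ge0 : forall v, 0 <= N v) (N_eq0 : forall v, N v = 0 -> v = 0)
  (NZ : forall c v, N (c *: v) = aF c * N v) (ND : forall u v, N (u + v) <= N u + N v).

Definition coefs_bounded {d} (w : 'I_d -> V) :=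
  forall i, exists2 C, 0 < C & forall c, aF (c i) <= C * N (\sum_j c j *: w j).

Lemma normN v : N (- v) = N v.
Proof. by rewrite -scaleN1r NZ (absvN haF) (absv1 haF) mul1r. Qed.

Lemma normB u v : N (u - v) <= N u + N v.
Proof. by rewrite -(normN v) ND. Qed.

Lemma norm_sum_le {d} (c : 'I_d -> F) (w : 'I_d -> V) :
  N (\sum_j c j *: w j) <= \sum_j aF (c j) * N (w j).
Proof.
elim/big_rec2: _ => [|j y1 y2 _ h]; first by rewrite -(scale0r 0) NZ (absv0 haF) mul0r.
by apply: le_trans (ND _ _) _; rewrite NZ lerD2l.
Qed.

Lemma norm_sum_lt {d} (w : 'I_d -> V) {e : R} : 0 < e ->
  exists2 eta, 0 < eta & forall c : 'I_d -> F,
    (forall j, aF (c j) < eta) -> N (\sum_j c j *: w j) < e.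
Proof.
move=> e_gt0; set S := \sum_j N (w j).
have S1_gt0 : 0 < 1 + S by rewrite ltr_wpDr ?sumr_ge0.
exists (e / (1 + S)) => [|c hc]; first by rewrite divr_gt0.
apply: le_lt_trans (norm_sum_le c w) _.
apply: (@le_lt_trans _ _ (e / (1 + S) * S)).
  by rewrite mulr_sumr ler_sum // => j _; rewrite ler_wpM2r // ltW.
by rewrite -ltr_pdivlMl ?divr_gt0 // invf_div divfK ?gt_eqF // -subr_gt0 addrK ltr01.
Qed.

Lemma sum_scalerB {d} (c c' : 'I_d -> F) (w : 'I_d -> V) :
  \sum_j (c j - c' j) *: w j = \sum_j c j *: w j - \sum_j c' j *: w j.
Proof. by rewrite -sumrB; apply: eq_bigr => j _; rewrite scalerBl. Qed.

Lemma span_closed {d} (w : 'I_d -> V) (cs : nat -> 'I_d -> F) y :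
  coefs_bounded w -> converges_to N (fun k => \sum_j cs k j *: w j) y ->
  exists l, y = \sum_j l j *: w j.
Proof.
move=> w_bounded cs_cvg; set s := fun k => _ in cs_cvg.
have cs_cauchy j : cauchy_seq aF (cs^~ j).
  move=> e e_gt0; have [C C_gt0 hC] := w_bounded j.
  have [M hM] := cs_cvg _ (divr_gt0 (divr_gt0 e_gt0 C_gt0) (ltr0n _ 2)).
  exists M => m k hm hk; apply: le_lt_trans (hC (fun j => cs m j - cs k j)) _.
  rewrite sum_scalerB -(subrKA y) -[y - _]opprB mulrC -ltr_pdivlMr // (splitr (e / C)).
  exact: le_lt_trans (normB _ _) (ltrD (hM m hm) (hM k hk)).
have [l cs_to_l] := fin_all_exists (fun j => F_complete _ (cs_cauchy j)).
exists l; apply/eqP; rewrite -subr_eq0; apply/eqP/N_eq0/eqP.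
rewrite eq_le N_ge0 andbT; apply/ler_addgt0Pr => e e_gt0; rewrite add0r.
have e2_gt0 : 0 < e / 2 by rewrite divr_gt0.
have [eta eta_gt0 small] := norm_sum_lt w e2_gt0.
have [M hM] := cs_cvg _ e2_gt0.
have [Ml hMl] := fin_all_exists (fun j => cs_to_l j _ eta_gt0).
pose k := maxn M (\max_j Ml j).
rewrite -(subrKA (s k)) addrC -opprB -sum_scalerB (splitr e) ltW //.
apply: le_lt_trans (normB _ _) (ltrD (small _ _) (hM _ (leq_maxl _ _))) => j.
by apply: hMl; rewrite (leq_trans _ (leq_maxr _ _)) // (leq_bigmax j).
Qed.

Lemma dist_span_gt0 {d} (w : 'I_d -> V) x : coefs_bounded w ->
  (forall c, x + \sum_j c j *: w j != 0) ->
  exists2 delta, 0 < delta & forall c, delta <= N (x + \sum_j c j *: w j).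
Proof.
move=> w_bounded x_notin_span; apply: contrapT => no_delta.
have near_x k : exists c, N (x + \sum_j c j *: w j) < k.+1%:R^-1.
  apply: contrapT => far_x; apply: no_delta; exists k.+1%:R^-1 => [|c].
    by rewrite invr_gt0 ltr0n.
  by rewrite leNgt; apply/negP => near_c; apply: far_x; exists c.
have [cs hcs] := choice near_x.
have [l xE] : exists l, - x = \sum_j l j *: w j.
  apply: (span_closed w cs (- x) w_bounded) => e e_gt0.
  have [M hM] := inv_succ_lt e_gt0; exists M => k hk.
  by rewrite opprK addrC; apply: lt_trans (hcs k) (hM k hk).
by have := x_notin_span l; rewrite -xE addrN eqxx.
Qed.

Lemma coef_le_dist {d} (w : 'I_d.+1 -> V) i delta : 0 < delta ->
  (forall c, delta <= N (w i + \sum_j c j *: w (lift i j))) ->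
  forall c, aF (c i) <= delta^-1 * N (\sum_j c j *: w j).
Proof.
move=> delta_gt0 w_far c; have [->|ci_neq0] := eqVneq (c i) 0.
  by rewrite (absv0 haF) mulr_ge0 ?invr_ge0 ?N_ge0 ?ltW.
have -> : \sum_j c j *: w j = c i *: (w i + \sum_j (c (lift i j) / c i) *: w (lift i j)).
  rewrite (bigD1_ord i) //= scalerDr scaler_sumr; congr (_ + _).
  by apply: eq_bigr => j _; rewrite scalerA mulrC divfK.
rewrite NZ mulrCA -[leLHS]mulr1; apply: ler_wpM2l; first exact: absv_ge0.
by rewrite ler_pdivlMl // mulr1; apply: w_far.
Qed.

Lemma free_coefs_bounded {d} (w : 'I_d -> V) :
  (forall c, \sum_j c j *: w j = 0 -> forall j, c j = 0) -> coefs_bounded w.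
Proof.
elim: d w => [|d IH] w w_free i; first by case: i.
pose ext (c : 'I_d -> F) ci k := if unlift i k is Some j then c j else ci.
have sum_ext c ci : \sum_k ext c ci k *: w k = ci *: w i + \sum_j c j *: w (lift i j).
  by rewrite (bigD1_ord i) //= /ext unlift_none; under eq_bigr do rewrite liftK.
have [||delta delta_gt0 w_far] := dist_span_gt0 (w \o lift i) (w i).
- apply: IH => c c0 j; have := w_free (ext c 0); rewrite sum_ext scale0r add0r.
  by move=> /(_ c0 (lift i j)); rewrite /ext liftK.
- move=> c; apply/eqP => wi_in_span; have := w_free (ext c 1).
  rewrite sum_ext scale1r => /(_ wi_in_span i).
  by rewrite /ext unlift_none; apply/eqP/oner_neq0.
exists delta^-1; first by rewrite invr_gt0.
exact: coef_le_dist.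
Qed.

End FreeFamilyCoefficients.

Definition scalev {F : fieldType} {K : lmodType F} (v : K) (c : F) : K := c *: v.

HB.instance Definition _ {F : fieldType} {K : lmodType F} (v : K) :=
  GRing.isZmodMorphism.Build F K (scalev v) (fun c c' => scalerBl c c' v).

Section FiniteExtension.
Context {R : realType} {F : fieldType} {aF : F -> R}.
Hypotheses (haF : is_absval aF)
  (F_complete : forall u, cauchy_seq aF u -> exists l, converges_to aF u l).
Context {K : fieldExtType F} {aK : K -> R} {G : topGroup}.
Hypotheses (haK : is_absval aK) (aK_ext : forall c, aK c%:A = aF c).

Local Notation b := (vbasis {: K}).

Definition coord_fun (f : tg_car G -> K) (i : 'I_(\dim {: K})) := coord b i \o f.

Definition vbasis_comb (u : 'I_(\dim {: K}) -> tg_car G -> F) x := \sum_i u i x *: b`_i.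

Lemma absK_scale c x : aK (c *: x) = aF c * aK x.
Proof. by rewrite -mulr_algl (absvM haK) aK_ext. Qed.

Lemma coord_vbasis_bounded i :
  exists2 C, 0 < C & forall x, aF (coord b i x) <= C * aK x.
Proof.
have b_free (c : 'I_(\dim {: K}) -> F) : \sum_j c j *: b`_j = 0 -> forall j, c j = 0.
  exact/freeP/basis_free/vbasisP.
have [C C_gt0 hC] := free_coefs_bounded haF F_complete (absv_ge0 haK)
  (absv_eq0 haK) absK_scale (absvD haK) _ b_free i.
by exists C => // x; have := hC (fun j => coord b j x); rewrite -coord_vbasis ?memvf.
Qed.

Lemma scalev_vbasis_bounded i :
  exists2 C, 0 < C & forall c, aK (scalev b`_i c) <= C * aF c.
Proof.
exists (aK b`_i + 1) => [|c]; first by rewrite ltr_wpDl ?absv_ge0.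
rewrite /scalev absK_scale mulrC.
by apply: ler_wpM2r; [exact: absv_ge0 | rewrite lerDl ler01].
Qed.

Lemma quasimorphism_coord_fun f i :
  quasimorphism aK f -> quasimorphism aF (coord_fun f i).
Proof.
by have [C C_gt0 hC] := coord_vbasis_bounded i; exact: quasimorphism_comp C_gt0 hC f.
Qed.

Lemma trivial_class_coord_fun f i :
  trivial_class aK f -> trivial_class aF (coord_fun f i).
Proof.
by have [C C_gt0 hC] := coord_vbasis_bounded i; exact: trivial_class_comp C_gt0 hC f.
Qed.

Lemma quasimorphism_vbasis_comb u :
  (forall i, quasimorphism aF (u i)) -> quasimorphism aK (vbasis_comb u).
Proof.
move=> u_qm; apply: big_fun_ind (quasimorphism0 haK) (quasimorphismD haK) _ _ _ => i.
have [C C_gt0 hC] := scalev_vbasis_bounded i.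
exact: quasimorphism_comp C_gt0 hC _ (u_qm i).
Qed.

Lemma trivial_class_vbasis_comb u :
  (forall i, trivial_class aF (u i)) -> trivial_class aK (vbasis_comb u).
Proof.
move=> u_triv; apply: big_fun_ind (trivial_class0 haK) (trivial_classD haK) _ _ _ => i.
have [C C_gt0 hC] := scalev_vbasis_bounded i.
exact: trivial_class_comp C_gt0 hC _ (u_triv i).
Qed.

Lemma coord_fun_vbasis_comb u i : coord_fun (vbasis_comb u) i = u i.
Proof.
apply/funext => x; rewrite /coord_fun /vbasis_comb /=.
by rewrite coord_sum_free // (basis_free (vbasisP _)).
Qed.

Lemma vbasis_comb_coord_fun f : vbasis_comb (coord_fun f) = f.
Proof. by apply/funext => x; rewrite /vbasis_comb -coord_vbasis ?memvf. Qed.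

Lemma trivial_class_of_coord_fun f :
  (forall i, trivial_class aF (coord_fun f i)) -> trivial_class aK f.
Proof. by rewrite -{2}(vbasis_comb_coord_fun f); apply: trivial_class_vbasis_comb. Qed.

Lemma EH2cb_iso_coord_fun : EH2cb_iso_pow aF aK G (\dim {: K}).
Proof.
exists coord_fun; split.
- by move=> f f_qm i; apply: quasimorphism_coord_fun.
- move=> f g _ _ fg_triv i.
  have -> : (fun x => coord_fun f i x - coord_fun g i x) = coord_fun (f \- g) i.
    by apply/funext => x; rewrite /coord_fun /= raddfB.
  exact: trivial_class_coord_fun.
- move=> c f g _ _ i; under eq_fun do rewrite /coord_fun /= linearP subrr.
  exact: trivial_class0.
- by move=> f _; apply: trivial_class_of_coord_fun.
- move=> u u_qm; exists (vbasis_comb u); first exact: quasimorphism_vbasis_comb.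
  move=> i; rewrite coord_fun_vbasis_comb; under eq_fun do rewrite subrr.
  exact: trivial_class0.
Qed.

Lemma EH2cb_zero_ext : EH2cb_zero aK G <-> EH2cb_zero aF G.
Proof.
split=> [K_zero u u_qm | F_zero f f_qm].
- have i0 : 'I_(\dim {: K}) := Ordinal (adim_gt0 (aspacef K)).
  have [C C_gt0 hC] := scalev_vbasis_bounded i0.
  have -> : u = coord_fun (scalev b`_i0 \o u) i0.
    apply/funext => x; rewrite /coord_fun /scalev /= linearZ /=.
    by rewrite (coord_free _ _ (basis_free (vbasisP _))) eqxx mulr1.
  exact/trivial_class_coord_fun/K_zero/(quasimorphism_comp C_gt0 hC).
- apply: trivial_class_of_coord_fun => i.
  exact/F_zero/quasimorphism_coord_fun.
Qed.

End FiniteExtension.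

Theorem corollary9p38 (R : realType) (p : nat) (p_prime : prime p)
    (Qp : fieldType) (absQp : Qp -> R) (hQp : is_Qp p absQp)
    (n : nat) (K : fieldExtType Qp) (hdim : \dim {: K} = n)
    (absK : K -> R) (habsK : is_absval absK)
    (hext : forall c : Qp, absK (c%:A) = absQp c)
    (G : topGroup) :
  EH2cb_iso_pow absQp absK G n /\
  (EH2cb_zero absK G <-> EH2cb_zero absQp G).
Proof.
case: hQp => habsQp _ _ _ Qp_complete; rewrite -hdim; split.
- exact: EH2cb_iso_coord_fun.
- exact: EH2cb_zero_ext.
Qed.
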